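(* For every fixed integer $r\ge1$, there is a function $\varepsilon(k)\to0$ as $k\to\infty$ such that for every $k$ and every family $F$ of functions from a set $X$ to $\{0,1,\dots,k-1\}$, \[\mathrm{opt}_{\mathrm{amb},r}(F)\le(1+\varepsilon(k))\,\mathrm{opt}_{\mathrm{std}}(F)\,k^r\ln k.\]
   Context: Let $F$ be a family of functions from $X$ to $Y$. In online learning an adversary secretly fixes $f\in F$ and presents inputs; the learner guesses values of $f$. In the standard model each input is presented singly and after the guess the true value is revealed; $\mathrm{opt}_{\mathrm{std}}(F)$ is the maximum number of incorrect guesses under optimal play by both sides. In the $r$-delayed ambiguous reinforcement model, each round $i$ consists of $r$ inputs $x_{i,1},\dots,x_{i,r}$ given one at a time: the learner must guess $f(x_{i,j})$ before receiving $x_{i,j+1}$; after all $r$ guesses the adversary says YES if all $r$ guesses were correct and NO otherwise. A mistake is a round with answer NO. $\mathrm{opt}_{\mathrm{amb},r}(F)$ is the maximum number of mistakes under optimal play by both learner and adversary (answers consistent with some $f\in F$). *)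

From mathcomp Require Import all_boot.


Set Implicit Arguments.
Unset Strict Implicit.
Unset Printing Implicit Defensive.

Definition fun_family (X : Type) (Y : Type) := (X -> Y) -> Prop.

(* Standard model.  [std_force V m] : in the game where the current      *)
(* version space (set of functions consistent with all revealed values) *)
(* is V, the adversary has a strategy forcing at least m further        *)
(* mistakes against every learner.  Each step: the adversary presents   *)
(* x, the learner guesses y, the adversary reveals a true value v which *)
(* must be consistent with some function of V; it is a mistake iff      *)
(* v <> y.  The inductive (least fixed point) reading means the m       *)
(* mistakes are forced within finitely many rounds.                     *)
Inductive std_force {X : Type} {Y : eqType} : fun_family X Y -> nat -> Prop :=
| std_force0 (V : fun_family X Y) : std_force V 0
| std_force_step (V : fun_family X Y) (m : nat) :
    (exists x : X, forall y : Y, exists v : Y,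
        (exists f, V f /\ f x = v) /\
        std_force (fun f => V f /\ f x = v) (if v == y then m else m.-1)) ->
    std_force V m.

Definition opt_std {X : Type} {Y : eqType} (F : fun_family X Y) (n : nat) : Prop :=
  std_force F n /\ forall m, std_force F m -> m <= n.

(* [acc] is the list of (input, guess) pairs of the current round so    *)
(* far.  Within a round, while fewer than r inputs were given, the      *)
(* adversary picks the next input (depending on everything so far) and *)
(* the learner guesses.  After r guesses the adversary answers YES (all *)
(* guesses correct) or NO; the answer must be consistent with some f in *)
(* the current version space, which is then restricted accordingly.    *)
(* A NO round is a mistake.                                             *)
Definition all_correct {X : Type} {Y : eqType} (f : X -> Y) (acc : seq (X * Y)) : bool :=
  all (fun p => f p.1 == p.2) acc.

Inductive amb_force {X : Type} {Y : eqType} (r : nat) :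
    fun_family X Y -> nat -> seq (X * Y) -> Prop :=
| amb_force0 (V : fun_family X Y) (acc : seq (X * Y)) : amb_force r V 0 acc
| amb_force_input (V : fun_family X Y) (m : nat) (acc : seq (X * Y)) :
    size acc < r ->
    (exists x : X, forall y : Y, amb_force r V m (rcons acc (x, y))) ->
    amb_force r V m acc
| amb_force_yes (V : fun_family X Y) (m : nat) (acc : seq (X * Y)) :
    size acc = r ->
    (exists f, V f /\ all_correct f acc) ->
    amb_force r (fun f => V f /\ all_correct f acc) m [::] ->
    amb_force r V m acc
| amb_force_no (V : fun_family X Y) (m : nat) (acc : seq (X * Y)) :
    size acc = r ->
    (exists f, V f /\ ~~ all_correct f acc) ->
    amb_force r (fun f => V f /\ ~~ all_correct f acc) m [::] ->
    amb_force r V m.+1 acc.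

Definition opt_amb {X : Type} {Y : eqType} (r : nat) (F : fun_family X Y) (n : nat) : Prop :=
  amb_force r F n [::] /\ forall m, amb_force r F m [::] -> m <= n.

(* Fix a scale a >= r k and give a subfamily S of F the weight
   a ^ L(S), where L(S) is the standard-model optimum of S (zero weight if S
   is empty).  The learner keeps a list of subfamilies covering the version
   space; its potential, the total weight, starts at most a ^ opt_std(F) and
   stays >= 1 while the version space is nonempty.  Inside a round it guesses
   greedily, so that after j guesses the families whose standard optimal
   algorithm (SOA) predicts all guesses so far still carry a k^-j fraction of
   the potential.  After YES every family is restricted to the functions
   consistent with the round.  After NO a family on the SOA path is replaced
   by its restrictions where a guess is first contradicted: at most r k of
   them, each of weight at most 1/a of its own since deviating from the SOA
   lowers L; the other families are kept.  So every mistake multiplies the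
   potential by at most 1 - (a - r k) / (a k^r), whence
   mistakes * (a - r k) / (a k^r) <= opt_std(F) ln a, and the scale
   a = r k (ln k + 2) yields the factor 1 + O(ln ln k / ln k). *)

From Stdlib Require Import Reals.
From mathcomp Require Import all_boot.
From HB Require Import structures.
From Stdlib Require Import Lra Classical ClassicalEpsilon.
From mathcomp Require Import zify.

Set Implicit Arguments.
Unset Strict Implicit.
Unset Printing Implicit Defensive.

Open Scope R_scope.

Definition asbool (P : Prop) : bool := if excluded_middle_informative P then true else false.

Lemma asboolP (P : Prop) : reflect P (asbool P).
Proof. by rewrite /asbool; case: excluded_middle_informative => h; constructor. Qed.

(** * Standard model *)

Section StandardModel.
Variables (X : Type) (Y : eqType).
Implicit Types (S T : fun_family X Y).

Definition subfam S T := forall f, S f -> T f.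

Definition restrict S (x : X) (v : Y) : fun_family X Y := fun f => S f /\ f x = v.

Lemma subfam_restrict S x v : subfam (restrict S x v) S.
Proof. by move=> f []. Qed.

Lemma std_force_sub S T m : subfam S T -> std_force S m -> std_force T m.
Proof.
move: S T m; fix IH 5 => S T m hST hS.
destruct hS as [V | V n [x hx]]; first exact: std_force0.
apply: std_force_step; exists x => y.
destruct (hx y) as [v [[f [hVf hfx]] hv]].
exists v; split; first by exists f; split; [apply: hST|].
by apply: (IH _ _ _ _ hv) => g [/hST].
Qed.

Lemma std_force_le S m n : (n <= m)%N -> std_force S m -> std_force S n.
Proof.
move: S m n; fix IH 5 => S m n hnm hS.
case: n hnm => [|n] hnm; first exact: std_force0.
destruct hS as [V | V m [x hx]]; first by [].
apply: std_force_step; exists x => y.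
destruct (hx y) as [v [hv hforce]].
exists v; split => //; apply: IH hforce; case: (v == y) => /=; lia.
Qed.

Lemma std_force_fork S x v1 v2 m : v1 != v2 ->
  (exists f, restrict S x v1 f) -> (exists f, restrict S x v2 f) ->
  std_force (restrict S x v1) m -> std_force (restrict S x v2) m -> std_force S m.+1.
Proof.
move=> hne [f1 h1] [f2 h2] hv1 hv2; apply: std_force_step; exists x => y.
have [<- | hy] := eqVneq v1 y.
- by exists v2; rewrite eq_sym (negbTE hne); split => //; exists f2.
- by exists v1; rewrite (negbTE hy); split => //; exists f1.
Qed.

End StandardModel.

(** * Sums of reals *)

HB.instance Definition _ :=
  Monoid.isComLaw.Build R 0 Rplus (fun x y z => esym (Rplus_assoc x y z)) Rplus_comm Rplus_0_l.
HB.instance Definition _ := Monoid.isMulLaw.Build R 0 Rmult Rmult_0_l Rmult_0_r.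
HB.instance Definition _ :=
  Monoid.isAddLaw.Build R Rmult Rplus Rmult_plus_distr_r Rmult_plus_distr_l.

Section RealSums.
Variable I : Type.
Implicit Types (s : seq I) (P : pred I) (F G : I -> R).

Lemma Rsum_ge0 s P F : (forall i, P i -> 0 <= F i) -> 0 <= \big[Rplus/0]_(i <- s | P i) F i.
Proof. by move=> hF; apply: big_ind => [|x y|//]; lra. Qed.

Lemma Rsum_le s P F G : (forall i, P i -> F i <= G i) ->
  \big[Rplus/0]_(i <- s | P i) F i <= \big[Rplus/0]_(i <- s | P i) G i.
Proof. by move=> hFG; apply: big_ind2 => [|x1 x2 y1 y2|//]; lra. Qed.

Lemma Rsum_le_size s P F c : 0 <= c -> (forall i, P i -> F i <= c) ->
  \big[Rplus/0]_(i <- s | P i) F i <= INR (size s) * c.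
Proof.
move=> hc hF; elim: s => [|i s IH]; first by rewrite big_nil /=; lra.
rewrite big_cons [size _]/= S_INR; case: ifP => [/hF|_]; lra.
Qed.

End RealSums.

Lemma Rsum_ge_term (I : eqType) (s : seq I) (P : pred I) (F : I -> R) i :
  i \in s -> P i -> (forall j, P j -> 0 <= F j) -> F i <= \big[Rplus/0]_(j <- s | P j) F j.
Proof.
move=> hi hPi hF; rewrite (big_rem _ hi) hPi /=.
have := Rsum_ge0 (rem i s) hF; lra.
Qed.

Lemma Rsum_le_size_max (I : eqType) (i0 : I) (s : seq I) (g : I -> R) :
  (forall i, 0 <= g i) -> exists i, \big[Rplus/0]_(j <- s) g j <= INR (size s) * g i.
Proof.
move=> hg.
have [i hi] : exists i, forall j, j \in s -> g j <= g i.
  elim: s => [|j s [i hi]]; first by exists i0.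
  have [hji | hij] := Rle_dec (g j) (g i).
  - by exists i => j'; rewrite in_cons => /predU1P [->|/hi].
  - exists j => j'; rewrite in_cons => /predU1P [->|/hi]; lra.
by exists i; rewrite big_seq; apply: Rsum_le_size => // j /hi.
Qed.

Lemma ln_le_sub1 z : 0 < z -> ln z <= z - 1.
Proof. by move=> hz; have := exp_ineq1_le (ln z); rewrite exp_ln //; lra. Qed.

Lemma ln_ge0 z : 1 <= z -> 0 <= ln z.
Proof.
move=> hz; rewrite -ln_1; case: (Req_dec z 1) => [-> | hne]; first lra.
by left; apply: ln_increasing; lra.
Qed.

(** * The potential argument *)

Section PotentialArgument.
Variables (X : Type) (Y : finType) (F : fun_family X Y) (ns : nat).
Hypothesis optF : opt_std F ns.
Variable y0 : Y.
Local Notation FF := (fun_family X Y).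
Implicit Types (S T : FF).

Definition capF S : FF := fun f => S f /\ F f.

Definition live S := exists f, capF S f.

(* The Littlestone dimension of S relative to F; the range is complete since F
   forces at most ns mistakes. *)
Definition ldim S : nat := \max_(m < ns.+1 | asbool (std_force (capF S) m)) m.

Lemma std_force_capF_le S m : std_force (capF S) m -> (m <= ns)%N.
Proof. by move=> h; apply: optF.2; apply: std_force_sub h => f []. Qed.

Lemma ldim_force S : std_force (capF S) (ldim S).
Proof.
apply: big_ind => [|m1 m2 h1 h2|m /asboolP //]; first exact: std_force0.
by rewrite /= /maxn; case: ltnP.
Qed.

Lemma ldim_max S m : std_force (capF S) m -> (m <= ldim S)%N.
Proof.
move=> h; have hm : (m < ns.+1)%N by rewrite ltnS; exact: std_force_capF_le h.
by apply: (leq_bigmax_cond (Ordinal hm)); apply/asboolP.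
Qed.

Lemma ldim_le S : (ldim S <= ns)%N.
Proof. exact: std_force_capF_le (ldim_force S). Qed.

Lemma ldim_mono S T : subfam S T -> (ldim S <= ldim T)%N.
Proof. by move=> hST; apply/ldim_max/(std_force_sub _ (ldim_force S)) => f [/hST]. Qed.

Lemma capF_restrict S x v : subfam (capF (restrict S x v)) (restrict (capF S) x v).
Proof. by move=> f [[]]. Qed.

(* Live labels rank above dead ones. *)
Definition soa_score S x v : nat :=
  if asbool (live (restrict S x v)) then (ldim (restrict S x v)).+1 else 0%N.

Definition soa S x : Y := [arg max_(v > y0) soa_score S x v].

Lemma ldim_restrict_lt S x v : v != soa S x -> live (restrict S x v) ->
  (ldim (restrict S x v) < ldim S)%N.
Proof.
rewrite /soa; case: arg_maxnP => // w _ wmax hne hlive.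
have := wmax v isT; rewrite /soa_score (introT (asboolP _) hlive).
case: asboolP => // wlive /=; rewrite ltnS => hle.
apply/ldim_max/(std_force_fork (x := x) hne).
- by have [f hf] := hlive; exists f; apply: capF_restrict.
- by have [f hf] := wlive; exists f; apply: capF_restrict.
- exact: std_force_sub (@capF_restrict _ _ _) (ldim_force _).
- exact: std_force_sub (@capF_restrict _ _ _) (std_force_le hle (ldim_force _)).
Qed.

Fixpoint soa_path S (acc : seq (X * Y)) : bool :=
  if acc is (x, y) :: acc' then (soa S x == y) && soa_path (restrict S x y) acc' else true.

Definition restrict_seq S (acc : seq (X * Y)) : FF := foldl (fun T p => restrict T p.1 p.2) S acc.

Lemma soa_path_rcons S acc x y :
  soa_path S (rcons acc (x, y)) = soa_path S acc && (soa (restrict_seq S acc) x == y).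
Proof. by elim: acc S => [|[x' y'] acc IH] S /=; rewrite ?andbT ?IH ?andbA. Qed.

Fixpoint deviations S (acc : seq (X * Y)) : seq FF :=
  if acc is (x, y) :: acc' then
    [seq restrict S x v | v <- enum Y & v != y] ++ deviations (restrict S x y) acc'
  else [::].

Definition covers (L : seq FF) f := has (fun S => asbool (S f)) L.

Lemma deviations_cover S acc f : S f -> ~~ all_correct f acc -> covers (deviations S acc) f.
Proof.
elim: acc S => [|[x y] acc IH] S //= hSf; rewrite /covers has_cat.
have [hfx | hfx] := eqVneq (f x) y => /= hwrong.
  by apply/orP; right; apply: IH.
apply/orP; left; rewrite has_map; apply/hasP; exists (f x).
  by rewrite mem_filter hfx mem_enum.
exact/asboolP.
Qed.

Definition correct_part S acc : FF := fun f => S f /\ all_correct f acc.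
Definition wrong_part S acc : FF := fun f => S f /\ ~~ all_correct f acc.

Definition refine_yes (L : seq FF) acc : seq FF := [seq correct_part V acc | V <- L].
Fixpoint refine_no (L : seq FF) acc : seq FF :=
  if L is V :: L' then
    (if soa_path V acc then deviations V acc else [:: wrong_part V acc]) ++ refine_no L' acc
  else [::].

Lemma refine_yes_cover L acc f : covers L f -> all_correct f acc -> covers (refine_yes L acc) f.
Proof.
by move=> hcov hok; rewrite /covers has_map; apply: sub_has hcov => V /asboolP hV; apply/asboolP.
Qed.

Lemma refine_no_cover L acc f :
  covers L f -> ~~ all_correct f acc -> covers (refine_no L acc) f.
Proof.
move=> + hwrong; elim: L => //= V L IH; rewrite /covers /= has_cat.
case/orP => [/asboolP hV | /IH hL]; apply/orP; [left | by right].
case: ifP => _; first exact: deviations_cover.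
by rewrite /= orbF; apply/asboolP.
Qed.

Variable a : R.
Hypothesis a_ge1 : 1 <= a.

Definition weight S : R := if asbool (live S) then a ^ ldim S else 0.

Definition potential (L : seq FF) : R := \big[Rplus/0]_(S <- L) weight S.

Definition path_potential (L : seq FF) acc : R :=
  \big[Rplus/0]_(S <- L | soa_path S acc) weight S.

Lemma weight_ge0 S : 0 <= weight S.
Proof. by rewrite /weight; case: asboolP => _; [apply: pow_le; lra | lra]. Qed.

Lemma weight_ge1 S : live S -> 1 <= weight S.
Proof. by rewrite /weight; case: asboolP => // _ _; apply: pow_R1_Rle. Qed.

Lemma weight_le S : weight S <= a ^ ns.
Proof.
rewrite /weight; case: asboolP => _; first by apply: Rle_pow => //; apply/leP/ldim_le.
by have := pow_le a ns ltac:(lra); lra.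
Qed.

Lemma weight_mono S T : subfam S T -> weight S <= weight T.
Proof.
move=> hST; rewrite /weight; case: asboolP => [[f [/hST hTf hFf]] | _]; last first.
  by case: asboolP => _; [apply: pow_le; lra | lra].
case: asboolP => [_ | []]; last by exists f.
by apply: Rle_pow => //; apply/leP/ldim_mono.
Qed.

Lemma weight_restrict S x v : v != soa S x -> a * weight (restrict S x v) <= weight S.
Proof.
move=> hv; rewrite {1}/weight; case: asboolP => [hlive | _]; last first.
  by rewrite Rmult_0_r; apply: weight_ge0.
have [f [[hSf _] hFf]] := hlive.
rewrite /weight; case: asboolP => [_ | []]; last by exists f.
by rewrite tech_pow_Rmult; apply: Rle_pow => //; apply/leP/ldim_restrict_lt.
Qed.

Lemma potential_ge0 L : 0 <= potential L.
Proof. exact: Rsum_ge0 (fun S _ => weight_ge0 S). Qed.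

Lemma path_potential_ge0 L acc : 0 <= path_potential L acc.
Proof. exact: Rsum_ge0 (fun S _ => weight_ge0 S). Qed.

Lemma potential_ge1 L f : F f -> covers L f -> 1 <= potential L.
Proof.
move=> hFf; elim: L => //= V L IH; rewrite /potential big_cons -/(potential L) /covers /=.
case/orP => [/asboolP hV | /IH].
  by have := weight_ge1 (ex_intro _ f (conj hV hFf)); have := potential_ge0 L; lra.
by have := weight_ge0 V; lra.
Qed.

Lemma potential_cat L1 L2 : potential (L1 ++ L2) = potential L1 + potential L2.
Proof. exact: big_cat. Qed.

Lemma potential_cons V L : potential (V :: L) = weight V + potential L.
Proof. by rewrite /potential big_cons. Qed.

Lemma potential_seq1 V : potential [:: V] = weight V.
Proof. by rewrite /potential big_seq1. Qed.

Lemma path_potential_cons V L acc : path_potential (V :: L) acc =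
  (if soa_path V acc then weight V else 0) + path_potential L acc.
Proof. by rewrite /path_potential big_cons; case: ifP => _; rewrite ?Rplus_0_l. Qed.

Lemma potential_le_path_nil L : potential L <= INR #|Y| ^ 0 * path_potential L [::].
Proof. by rewrite Rmult_1_l; apply: Rle_refl. Qed.

Lemma path_potential_split L acc x :
  path_potential L acc <= \big[Rplus/0]_(y <- enum Y) path_potential L (rcons acc (x, y)).
Proof.
rewrite /path_potential; under [X in _ <= X]eq_bigr => y _ do rewrite big_mkcond.
rewrite exchange_big big_mkcond; apply: Rsum_le => V _.
have hterm y : 0 <= if soa_path V (rcons acc (x, y)) then weight V else 0.
  by case: ifP => _; [apply: weight_ge0 | lra].
case: ifP => hpath; last exact: Rsum_ge0.
have hmem : soa (restrict_seq V acc) x \in enum Y by rewrite mem_enum.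
have := Rsum_ge_term (P := xpredT) hmem isT (fun y _ => hterm y).
by rewrite soa_path_rcons hpath eqxx; apply.
Qed.

Lemma path_potential_greedy L acc x :
  exists y, path_potential L acc <= INR #|Y| * path_potential L (rcons acc (x, y)).
Proof.
have [y hy] := Rsum_le_size_max y0 (enum Y) (fun y => path_potential_ge0 L (rcons acc (x, y))).
by exists y; rewrite cardE; apply: Rle_trans (path_potential_split L acc x) hy.
Qed.

Lemma deviations_potential S acc : soa_path S acc ->
  a * potential (deviations S acc) <= INR (size acc) * INR #|Y| * weight S.
Proof.
elim: acc S => [|[x y] acc IH] S; first by rewrite /potential big_nil /=; lra.
rewrite [deviations _ _]/= [size _]/= S_INR => /andP [/eqP hsoa hpath].
rewrite potential_cat {1}/potential big_map big_filter Rmult_plus_distr_l.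
set dev := \big[Rplus/0]_(v <- enum Y | v != y) weight (restrict S x v).
have hdev : a * dev <= INR #|Y| * weight S.
  rewrite /dev big_distrr cardE; apply: Rsum_le_size => [|v hv]; first exact: weight_ge0.
  by apply: weight_restrict; rewrite hsoa.
have hrest : INR (size acc) * INR #|Y| * weight (restrict S x y) <=
               INR (size acc) * INR #|Y| * weight S.
  apply: Rmult_le_compat_l; last exact: weight_mono (@subfam_restrict _ _ S x y).
  by apply: Rmult_le_pos; apply: pos_INR.
by have := IH _ hpath; lra.
Qed.

Lemma refine_yes_potential L acc : potential (refine_yes L acc) <= potential L.
Proof. by rewrite /potential big_map; apply: Rsum_le => V _; apply: weight_mono => f []. Qed.

Lemma refine_no_potential L acc : a * potential (refine_no L acc) <=
  a * potential L - (a - INR (size acc) * INR #|Y|) * path_potential L acc.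
Proof.
elim: L => [|V L IH]; first by rewrite /potential /path_potential !big_nil; lra.
rewrite [refine_no _ _]/= potential_cat !potential_cons path_potential_cons.
case: ifP => hpath.
  by have := deviations_potential hpath; lra.
have hW : subfam (wrong_part V acc) V by move=> f [].
by rewrite potential_seq1; have := Rmult_le_compat_l a _ _ ltac:(lra) (weight_mono hW); lra.
Qed.

Variable r : nat.
Hypothesis rk_le_a : INR r * INR #|Y| <= a.

Definition contraction : R := 1 - (a - INR r * INR #|Y|) / (a * INR #|Y| ^ r).

Lemma card_ge1 : 1 <= INR #|Y|.
Proof. by apply/(le_INR 1)/leP/card_gt0P; exists y0. Qed.

Lemma contraction_ge0 : 0 <= contraction.
Proof.
have hK : 1 <= INR #|Y| ^ r by apply: pow_R1_Rle; exact: card_ge1.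
have hrk : 0 <= INR r * INR #|Y| by apply: Rmult_le_pos; apply: pos_INR.
suff : (a - INR r * INR #|Y|) / (a * INR #|Y| ^ r) <= 1 by rewrite /contraction; lra.
apply: (Rmult_le_reg_r (a * INR #|Y| ^ r)); first nra.
rewrite /Rdiv Rmult_assoc Rinv_l; nra.
Qed.

Lemma refine_no_contract L acc : size acc = r ->
  potential L <= INR #|Y| ^ size acc * path_potential L acc ->
  potential (refine_no L acc) <= contraction * potential L.
Proof.
move=> hsize; have hno := refine_no_potential L acc; rewrite hsize in hno * => hL.
have hK : 1 <= INR #|Y| ^ r by apply: pow_R1_Rle; exact: card_ge1.
rewrite /contraction; set K := INR #|Y| ^ r in hL hK *; set c := a - INR r * INR #|Y| in hno *.
have hcW : c * potential L <= c * K * path_potential L acc.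
  by rewrite Rmult_assoc; apply: Rmult_le_compat_l => //; rewrite /c; lra.
apply: (Rmult_le_reg_l (a * K)); first nra.
have -> : a * K * ((1 - c / (a * K)) * potential L) = a * K * potential L - c * potential L.
  by field; split; lra.
by have := Rmult_le_compat_l K _ _ ltac:(lra) hno; lra.
Qed.

Lemma amb_force_potential V m acc : amb_force r V m acc ->
  forall L, subfam V F -> (forall f, V f -> covers L f) ->
  potential L <= INR #|Y| ^ size acc * path_potential L acc ->
  m = 0%N \/ 1 <= contraction ^ m * potential L.
Proof.
move: V m acc; fix IH 4 => V m acc hV L hVF hcov hL.
have hq := contraction_ge0.
destruct hV as [V acc | V m acc _ [x hx] | V m acc hsize _ hV | V m acc hsize [f [hVf hwrong]] hV].
- by left.
- have [y hy] := path_potential_greedy L acc x.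
  apply: (IH _ _ _ (hx y) L hVF hcov); rewrite size_rcons -tech_pow_Rmult.
  have := Rmult_le_compat_l _ _ _ (pow_le _ (size acc) (pos_INR #|Y|)) hy.
  move: hL; set k := INR #|Y|; set W := path_potential L (rcons acc (x, y)); lra.
- have hVF' : subfam (correct_part V acc) F by move=> f [/hVF].
  have hcov' f : correct_part V acc f -> covers (refine_yes L acc) f.
    by move=> [/hcov]; apply: refine_yes_cover.
  have [-> | h] := IH _ _ _ hV _ hVF' hcov' (potential_le_path_nil _); [by left | right].
  by have := Rmult_le_compat_l _ _ _ (pow_le _ m hq) (refine_yes_potential L acc); lra.
- right.
  have hVF' : subfam (wrong_part V acc) F by move=> g [/hVF].
  have hcov' g : wrong_part V acc g -> covers (refine_no L acc) g.
    by move=> [/hcov]; apply: refine_no_cover.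
  have hge1 : 1 <= potential (refine_no L acc).
    exact: potential_ge1 (hVF _ hVf) (hcov' _ (conj hVf hwrong)).
  have hle := refine_no_contract hsize hL.
  have hm : 1 <= contraction ^ m * potential (refine_no L acc).
    by case: (IH _ _ _ hV _ hVF' hcov' (potential_le_path_nil _)) => [-> | //]; rewrite /=; lra.
  by have := Rmult_le_compat_l _ _ _ (pow_le _ m hq) hle; rewrite /=; lra.
Qed.

Lemma amb_force_contraction na : amb_force r F na [::] ->
  na = 0%N \/ 1 <= contraction ^ na * a ^ ns.
Proof.
move=> hF; have hcov f : F f -> covers [:: F] f.
  by move=> hf; rewrite /covers /= orbF; apply/asboolP.
have [-> | h] := amb_force_potential hF (fun f hf => hf) hcov (potential_le_path_nil _).
  by left.
right.
rewrite potential_seq1 in h.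
by have := Rmult_le_compat_l _ _ _ (pow_le _ na contraction_ge0) (weight_le F); lra.
Qed.

Lemma amb_force_mistakes na : amb_force r F na [::] ->
  INR na * (a - INR r * INR #|Y|) <= INR ns * INR #|Y| ^ r * a * ln a.
Proof.
have hK : 1 <= INR #|Y| ^ r by apply: pow_R1_Rle; exact: card_ge1.
have hlna := ln_ge0 a_ge1.
have hns := pos_INR ns.
case: na => [_ | n /amb_force_contraction [//|h]].
  rewrite INR_0 Rmult_0_l; apply: Rmult_le_pos => //.
  by apply: Rmult_le_pos; [apply: Rmult_le_pos|]; lra.
have hq : 0 < contraction.
  case: (contraction_ge0) => // e; rewrite -e pow_i ?Rmult_0_l in h; [lra | lia].
have ha : 0 < a by lra.
have hlog : 0 <= INR n.+1 * ln contraction + INR ns * ln a.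
  by rewrite -!ln_pow // -ln_mult; [exact: ln_ge0 | exact: pow_lt | exact: pow_lt].
have := ln_le_sub1 hq; rewrite /contraction in hlog *.
set K := INR #|Y| ^ r in hK hlog *; set c := a - INR r * INR #|Y| in hlog *; move=> hlnq.
have hD : c / (a * K) * (a * K) = c by field; split; lra.
have hND : INR n.+1 * (c / (a * K)) <= INR ns * ln a.
  by have := Rmult_le_compat_l _ _ _ (pos_INR n.+1) hlnq; lra.
rewrite -{1}hD; have := Rmult_le_compat_r (a * K) _ _ ltac:(nra) hND; lra.
Qed.

End PotentialArgument.

(** * The overhead factor *)

(* For s = sqrt (u + 2) >= M: ln (u + 2) = 2 ln s < 2 s and e s^2 >= (c + 4 + 2 e) s. *)
Lemma log_shift_small c e u : 0 < e -> 0 <= c -> ((c + 4 + 2 * e) / e) ^ 2 <= u ->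
  c + 2 * ln (u + 2) <= e * u.
Proof.
move=> he hc hu; set M := (c + 4 + 2 * e) / e in hu.
have hMe : M * e = c + 4 + 2 * e by rewrite /M; field; lra.
have hM : 2 <= M by nra.
have hu0 : 0 <= u + 2 by nra.
set s := sqrt (u + 2); have hss : s * s = u + 2 by exact: sqrt_sqrt.
have hs0 : 0 <= s by exact: sqrt_pos.
have hMs : M <= s by nra.
have hln : ln (u + 2) = 2 * ln s by rewrite -hss ln_mult; lra.
have := ln_le_sub1 (ltac:(lra) : 0 < s); nra.
Qed.

(* With u = ln k and B = ln r + ln (u + 2), (1 + eps) u = u + 2 B + 1, which
   dominates (u + 2) (u + B) / (u + 1) = ln (r k t) t / (t - 1) for t = ln k + 2. *)
Definition amb_overhead (r k : nat) : R :=
  (2 * (ln (INR r) + ln (ln (INR k) + 2)) + 1) / ln (INR k).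

Lemma amb_overhead_cvg r : (1 <= r)%N -> Un_cv (amb_overhead r) 0.
Proof.
move=> hr e he.
have hlnr : 0 <= ln (INR r) by apply: ln_ge0; apply/(le_INR 1)/leP.
set c := 2 * ln (INR r) + 1; set M := ((c + 4 + 2 * (e / 2)) / (e / 2)) ^ 2.
have hM : 0 < M.
  by apply: pow_lt; apply: Rdiv_lt_0_compat; rewrite /c; lra.
have [N hN] := INR_archimed 1 (exp M) ltac:(lra).
exists N => n /le_INR hn.
have hu : M < ln (INR n).
  by rewrite -[M]ln_exp; apply: ln_increasing; [exact: exp_pos | lra].
have hu2 : 0 <= ln (ln (INR n) + 2) by apply: ln_ge0; lra.
have hc : 0 <= c by rewrite /c; lra.
have hsmall := log_shift_small (e := e / 2) ltac:(lra) hc (Rlt_le _ _ hu).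
rewrite /Rdist Rminus_0_r /amb_overhead Rabs_pos_eq; last first.
  by apply: Rle_mult_inv_pos; lra.
apply: (Rmult_lt_reg_r (ln (INR n))); first lra.
have heu : 0 < e * ln (INR n) by apply: Rmult_lt_0_compat; lra.
by rewrite /Rdiv Rmult_assoc Rinv_l; rewrite /c in hsmall; lra.
Qed.

Definition amb_scale (r k : nat) : R := INR r * INR k * (ln (INR k) + 2).

Lemma ln_INR_gt0 k : (2 <= k)%N -> 0 < ln (INR k).
Proof. by move=> hk; rewrite -ln_1; apply: ln_increasing; [lra | apply: lt_1_INR; apply/ltP]. Qed.

Lemma amb_scale_ge r k : (1 <= r)%N -> (2 <= k)%N -> 1 <= INR r * INR k <= amb_scale r k.
Proof.
move=> hr hk; have hu := ln_INR_gt0 hk.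
have hr1 : 1 <= INR r by apply/(le_INR 1)/leP.
have hk2 : 2 <= INR k by apply/(le_INR 2)/leP.
have hrk : 1 <= INR r * INR k by nra.
split => //; rewrite /amb_scale.
by have := Rmult_le_compat_l (INR r * INR k) 1 (ln (INR k) + 2) ltac:(lra) ltac:(lra); lra.
Qed.

Lemma amb_overhead_mistakes r k (na ns : nat) (K : R) : (1 <= r)%N -> (2 <= k)%N -> 0 <= K ->
  INR na * (amb_scale r k - INR r * INR k) <= INR ns * K * amb_scale r k * ln (amb_scale r k) ->
  INR na <= (1 + amb_overhead r k) * INR ns * K * ln (INR k).
Proof.
move=> hr hk hK; have hu := ln_INR_gt0 hk; have [hrk _] := amb_scale_ge hr hk.
have hr1 : 1 <= INR r by apply/(le_INR 1)/leP.
have hk0 : 0 < INR k by apply/lt_0_INR/ltP; lia.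
have hlna : ln (amb_scale r k) = ln (INR k) + (ln (INR r) + ln (ln (INR k) + 2)).
  by rewrite /amb_scale !ln_mult; lra.
set u := ln (INR k) in hu hlna *; set B := ln (INR r) + ln (u + 2) in hlna *.
have hB : 0 <= B.
  by have := ln_ge0 hr1; have := ln_ge0 (ltac:(lra) : 1 <= u + 2); rewrite /B; lra.
have hover : (1 + amb_overhead r k) * INR ns * K * u = (u + 2 * B + 1) * (INR ns * K).
  by rewrite /amb_overhead -/u -/B; field; lra.
have hpoly : (u + 2) * (u + B) <= (u + 1) * (u + 2 * B + 1) by nra.
rewrite hlna hover /amb_scale -/u => h.
apply: (Rmult_le_reg_l (INR r * INR k * (u + 1))); first nra.
have hnsK : 0 <= INR ns * K by apply: Rmult_le_pos => //; apply: pos_INR.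
have hnsKrk : 0 <= INR ns * K * (INR r * INR k) by apply: Rmult_le_pos; lra.
by have := Rmult_le_compat_l _ _ _ hnsKrk hpoly; lra.
Qed.

(** * Degenerate instances *)

Section DegenerateCases.
Variables (r : nat) (X : Type) (Y : eqType).

Lemma amb_force_single_label (y0 : Y) (V : fun_family X Y) m acc :
  (forall y, y = y0) -> amb_force r V m acc -> m = 0%N.
Proof.
move=> hY; move: V m acc; fix IH 4 => V m acc hV.
destruct hV as [V acc | V m acc _ [x hx] | V m acc _ _ hV | V m acc _ [f [_ hwrong]] _].
- by [].
- exact: IH (hx y0).
- exact: IH hV.
- by move: hwrong; elim: acc => //= p acc IHacc; rewrite (hY (f p.1)) (hY p.2) eqxx.
Qed.

Lemma std_force_no_label (V : fun_family X Y) (x : X) m : (Y -> False) -> std_force V m.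
Proof. by move=> hY; apply: std_force_step; exists x => y; case: (hY y). Qed.

Lemma amb_force_no_input (V : fun_family X Y) m : (0 < r)%N -> (X -> False) ->
  amb_force r V m [::] -> m = 0%N.
Proof. by move=> hr hX hV; inversion hV as [| ? ? ? _ [x _] | |]; subst. Qed.

End DegenerateCases.

Lemma amb_force_small_codomain r (X : Type) k (F : fun_family X 'I_k) ns na :
  (0 < r)%N -> (k < 2)%N -> opt_std F ns -> amb_force r F na [::] -> na = 0%N.
Proof.
move=> hr; case: k F => [|[|k]] // F _ optF hF.
- have [[x] | hX] := classic (inhabited X); last first.
    by apply: amb_force_no_input hr _ hF => x; apply: hX.
  have := optF.2 ns.+1 (std_force_no_label F x ns.+1 ltac:(by case)); lia.
- exact: amb_force_single_label ord1 hF.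
Qed.

(* Stdlib's [ln] vanishes on nonpositive arguments, so [ln 0 = 0] as well. *)
Lemma ln_INR_lt2 k : (k < 2)%N -> ln (INR k) = 0.
Proof.
case: k => [|[|k]] // _; last by rewrite ln_1.
by rewrite /ln; case: Rlt_dec => // h; exfalso; move: h; rewrite INR_0; lra.
Qed.

Theorem mainTheorem8 (r : nat) (hr : (1 <= r)%N) :
  exists eps : nat -> R, Un_cv eps R0 /\
    forall (k : nat) (X : Type) (F : fun_family X 'I_k) (ns : nat),
      opt_std F ns ->
      forall na : nat, amb_force r F na [::] ->
        Rle (INR na)
          (Rmult (Rmult (Rmult (Rplus R1 (eps k)) (INR ns)) (pow (INR k) r)) (ln (INR k))).
Proof.
exists (amb_overhead r); split; first exact: amb_overhead_cvg.
move=> k X F ns optF na hna.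
have [hk | hk] := ltnP k 2.
  rewrite (amb_force_small_codomain hr hk optF hna) (ln_INR_lt2 hk) INR_0 Rmult_0_r.
  exact: Rle_refl.
have hk0 : (0 < k)%N by lia.
have [hrk hrka] := amb_scale_ge hr hk.
have ha1 : 1 <= amb_scale r k by lra.
have hrka' : INR r * INR #|'I_k| <= amb_scale r k by rewrite card_ord.
have := amb_force_mistakes optF (Ordinal hk0) ha1 hrka' hna; rewrite card_ord => hmis.
by apply: amb_overhead_mistakes hr hk _ hmis; apply: pow_le; apply: pos_INR.
Qed.
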